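(* For every $m\in\mathbb{N}\cup\{0\}$ and $(s,t)\in\mathbb{R}^2\setminus\{(0,0)\}$, $$\partial_s^m\Big(\frac{1}{\sqrt{s^2+t^2}}\Big)=\frac{P_m(s,t)}{(\sqrt{s^2+t^2})^{2m+1}},$$ where the polynomials $P_m$ are given, for $m\in\mathbb{N}\cup\{0\}$, by $$P_{2m}(s,t)=\sum_{i=0}^m a_{2m,2i}s^{2i}t^{2(m-i)},\qquad P_{2m+1}(s,t)=\sum_{i=0}^m a_{2m+1,2i+1}s^{2i+1}t^{2(m-i)},$$ with, for $0\le i\le m$, $$a_{2m,2i}=(-1)^{m-i}2^{2i-2m}(2m)!\,C_{2m}^{m-i}C_{m+i}^{m-i},\qquad a_{2m+1,2i+1}=(-1)^{m-i+1}2^{2i-2m}(2m+1)!\,C_{2m+1}^{m-i}C_{m+i+1}^{m-i}.$$ Moreover, for every $m\in\mathbb{N}=\{1,2,\dots\}$, $$\sum_{i=0}^m\frac{a_{2m,2i}}{C_{2m-1}^{m-i}}=-\frac{2}{2m+1}\sum_{i=0}^m\frac{a_{2m+1,2i+1}}{C_{2m}^{m-i}}=\frac{(2m)!}{2^{2m-1}},$$ $$(m+1)\sum_{i=0}^m\frac{a_{2m,2i}}{C_{2m}^{m-i}}=-\sum_{i=0}^m\frac{a_{2m+1,2i+1}}{C_{2m+1}^{m-i}}=\frac{(2m+2)!}{2^{2m+1}}.$$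
   Context: $C_n^k=\binom{n}{k}$ denotes the binomial coefficient, with the convention $C_0^0=1$. *)

From Stdlib Require Import Reals Factorial.
From Coquelicot Require Import Coquelicot.
Open Scope R_scope.

Definition invnorm (t : R) : R -> R := fun s => / sqrt (s ^ 2 + t ^ 2).

Definition a_even (m i : nat) : R :=
  (-1) ^ (m - i) * / 2 ^ (2 * (m - i)) * INR (Factorial.fact (2 * m))
  * Binomial.C (2 * m) (m - i) * Binomial.C (m + i) (m - i).

Definition a_odd (m i : nat) : R :=
  (-1) ^ (m - i + 1) * / 2 ^ (2 * (m - i)) * INR (Factorial.fact (2 * m + 1))
  * Binomial.C (2 * m + 1) (m - i) * Binomial.C (m + i + 1) (m - i).

(* P_{2m}(s,t) = sum_{i=0}^m a_{2m,2i} s^{2i} t^{2(m-i)}  (sum_f_R0 g m = g 0 + ... + g m) *)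
Definition P_even (m : nat) (s t : R) : R :=
  sum_f_R0 (fun i => a_even m i * s ^ (2 * i) * t ^ (2 * (m - i))) m.

Definition P_odd (m : nat) (s t : R) : R :=
  sum_f_R0 (fun i => a_odd m i * s ^ (2 * i + 1) * t ^ (2 * (m - i))) m.

From Stdlib Require Import Arith Reals Factorial Lia Lra.
From Coquelicot Require Import Coquelicot.
Open Scope R_scope.

(* Write r = sqrt (s^2 + t^2).  The quotient rule gives
   d/ds (Q / r^q) = ((s^2 + t^2) dQ/ds - q s Q) / r^(q+2), so the n-th derivative of 1/r is
   P_n / r^(2n+1) with P_0 = 1 and P_(n+1) = (s^2 + t^2) dP_n/ds - (2n+1) s P_n.  Writing
   P_n = sum_k c(n,k) s^(n-2k) t^(2k), this is the coefficient recurrence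
   c(n+1,k) = -(n+2k+1) c(n,k) + (n-2k+2) c(n,k-1), which is satisfied by
   c(n,k) = (-1)^n n! (-1/4)^k C(n,k) C(n-k,k); the polynomials of the statement are these,
   reindexed by i = m - k.
   Dividing c(n,k) by C(n,k) leaves (-1)^n n! (-1/4)^k C(n-k,k), and dividing it by C(n-1,k)
   leaves (-1)^n n! (-1/4)^k (2 C(n-k,k) - C(n-1-k,k)).  So the four sums reduce to
   S_n = sum_k (-1/4)^k C(n-k,k), which satisfies S_(n+2) = S_(n+1) - S_n / 4; the double
   characteristic root 1/2 gives S_n = (n+1) / 2^n. *)

(* Unlike [Binomial.C], which has junk values for [k > n], this vanishes there. *)
Fixpoint binom (n k : nat) : R :=
  match n, k with
  | _, O => 1
  | O, S _ => 0
  | S n', S k' => binom n' k' + binom n' (S k')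
  end.

Lemma binom_n0 n : binom n 0 = 1.
Proof. now destruct n. Qed.

Lemma binom_gt n k : (n < k)%nat -> binom n k = 0.
Proof.
  revert k; induction n as [|n IH]; intros [|k] Hk; cbn; try lia; [reflexivity|].
  rewrite !IH by lia; ring.
Qed.

Lemma binom_C n k : (k <= n)%nat -> binom n k = Binomial.C n k.
Proof.
  revert k; induction n as [|n IH]; intros [|k] Hk.
  - now rewrite C_n_0.
  - lia.
  - now rewrite binom_n0, C_n_0.
  - cbn [binom]. destruct (Nat.eq_dec k n) as [->|Hkn].
    + rewrite (binom_gt n (S n)), IH, !C_n_n by lia; ring.
    + rewrite !IH by lia. apply pascal; lia.
Qed.

Lemma C_neq_0 n k : Binomial.C n k <> 0.
Proof.
  unfold Binomial.C, Rdiv.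
  apply Rmult_integral_contrapositive_currified; [apply INR_fact_neq_0|].
  apply Rinv_neq_0_compat, Rmult_integral_contrapositive_currified; apply INR_fact_neq_0.
Qed.

Lemma binom_pascal_diag n j : binom (S n - j) (S j) = binom (n - j) j + binom (n - j) (S j).
Proof.
  destruct (Nat.le_gt_cases j n) as [Hj|Hj].
  - now replace (S n - j)%nat with (S (n - j)) by lia.
  - replace (S n - j)%nat with 0%nat by lia; replace (n - j)%nat with 0%nat by lia.
    rewrite !binom_gt by lia; ring.
Qed.

Lemma binom_ratio n k : (1 <= n)%nat -> (2 * k <= n)%nat ->
  binom n k * binom (n - k) k / Binomial.C (n - 1) k = 2 * binom (n - k) k - binom (n - 1 - k) k.
Proof.
  intros Hn Hk. destruct (Nat.eq_dec n (2 * k)) as [->|Hne].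
  - destruct k as [|k]; [lia|].
    replace (2 * S k - S k)%nat with (S k) by lia.
    rewrite (binom_gt (2 * S k - 1 - S k)), !binom_C, C_n_n by lia.
    unfold Binomial.C. replace (2 * S k - S k)%nat with (S k) by lia.
    replace (2 * S k - 1 - S k)%nat with k by lia.
    replace (2 * S k - 1)%nat with (S (2 * k)) by lia. replace (2 * S k)%nat with (S (S (2 * k))) by lia.
    rewrite !fact_simpl. repeat rewrite ?mult_INR, ?plus_INR, ?S_INR, ?INR_0.
    pose proof (INR_fact_neq_0 k); pose proof (INR_fact_neq_0 (2 * k)); pose proof (pos_INR k).
    field. repeat split; auto; lra.
  - destruct (Nat.le_exists_sub (2 * k + 1) n) as [j [-> _]]; [lia|].
    rewrite !binom_C by lia. unfold Binomial.C.
    replace (j + (2 * k + 1) - k)%nat with (S (j + k)) by lia.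
    replace (j + (2 * k + 1) - 1 - k)%nat with (j + k)%nat by lia.
    replace (S (j + k) - k)%nat with (S j) by lia. replace (j + k - k)%nat with j by lia.
    replace (j + (2 * k + 1) - 1)%nat with (j + 2 * k)%nat by lia.
    replace (j + 2 * k - k)%nat with (j + k)%nat by lia.
    replace (j + (2 * k + 1))%nat with (S (j + 2 * k)) by lia.
    rewrite !fact_simpl. repeat rewrite ?mult_INR, ?plus_INR, ?S_INR, ?INR_0.
    pose proof (INR_fact_neq_0 k); pose proof (INR_fact_neq_0 j); pose proof (INR_fact_neq_0 (j + k));
    pose proof (INR_fact_neq_0 (j + 2 * k)); pose proof (pos_INR k); pose proof (pos_INR j).
    field. repeat split; auto; lra.
Qed.

Lemma sum_f_R0_vanishing_tail (f : nat -> R) (N M : nat) :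
  (N <= M)%nat -> (forall k, (N < k <= M)%nat -> f k = 0) ->
  sum_f_R0 f M = sum_f_R0 f N.
Proof.
  intros HNM Hf; induction HNM as [|M HNM IH]; [reflexivity|].
  rewrite tech5, (Hf (S M)) by lia.
  rewrite IH by (intros k Hk; apply Hf; lia). ring.
Qed.

Definition diag_sum (N n : nat) : R := sum_f_R0 (fun k => (- / 4) ^ k * binom (n - k) k) N.

Lemma diag_sum_succ_range N n : (n <= 2 * N + 1)%nat -> diag_sum (S N) n = diag_sum N n.
Proof. intros Hn. unfold diag_sum. rewrite tech5, (binom_gt (n - S N)) by lia. ring. Qed.

Lemma diag_sum_rec N n :
  diag_sum (S N) (S (S n)) = diag_sum (S N) (S n) + (- / 4) * diag_sum N n.
Proof.
  unfold diag_sum. rewrite !(decomp_sum _ (S N)), scal_sum by lia. cbn [pred].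
  rewrite !Nat.sub_0_r, !binom_n0.
  rewrite (sum_eq _ (fun j => (- / 4) ^ S j * binom (S n - S j) (S j)
                              + (- / 4) ^ j * binom (n - j) j * (- / 4))).
  - rewrite plus_sum. ring.
  - intros j _. rewrite !Nat.sub_succ, binom_pascal_diag. cbn [pow]. ring.
Qed.

Lemma diag_sum_small N n : (n <= 1)%nat -> diag_sum N n = 1.
Proof.
  intros Hn. induction N as [|N IH].
  - unfold diag_sum. cbn. rewrite binom_n0. ring.
  - rewrite diag_sum_succ_range by lia. exact IH.
Qed.

Lemma diag_sum_closed N n : (n <= 2 * N + 1)%nat -> diag_sum N n = INR (S n) / 2 ^ n.
Proof.
  revert N. induction n as [n IH] using lt_wf_ind. intros N Hn.
  destruct n as [|[|n]].
  - rewrite diag_sum_small by lia. cbn. field.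
  - rewrite diag_sum_small by lia. cbn. field.
  - destruct N as [|N]; [lia|].
    rewrite diag_sum_rec, !IH by lia.
    rewrite !S_INR. cbn [pow]. field. apply pow_nonzero; lra.
Qed.

(* [coef n k] is the paper's a_{n,n-2k}. *)
Definition coef (n k : nat) : R :=
  (-1) ^ n * INR (fact n) * (- / 4) ^ k * binom n k * binom (n - k) k.

Lemma coef_vanish n k : (n < 2 * k)%nat -> coef n k = 0.
Proof. intros Hk. unfold coef. rewrite (binom_gt (n - k) k) by lia. ring. Qed.

Lemma coef_factorial n k : (2 * k <= n)%nat ->
  coef n k = (-1) ^ n * (- / 4) ^ k * INR (fact n) ^ 2
             / (INR (fact k) ^ 2 * INR (fact (n - 2 * k))).
Proof.
  intros Hk. unfold coef. rewrite !binom_C by lia.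
  unfold Binomial.C. replace (n - k - k)%nat with (n - 2 * k)%nat by lia.
  pose proof (INR_fact_neq_0 k); pose proof (INR_fact_neq_0 (n - k));
  pose proof (INR_fact_neq_0 (n - 2 * k)).
  field. auto.
Qed.

Lemma coef_succ_0 n : coef (S n) 0 = - INR (S n) * coef n 0.
Proof. unfold coef. rewrite !binom_n0, fact_simpl, mult_INR. cbn [pow]. ring. Qed.

Lemma coef_succ n k :
  coef (S n) (S k) = - INR (n + 2 * k + 3) * coef n (S k) + (INR n - 2 * INR k) * coef n k.
Proof.
  destruct (Nat.le_gt_cases (2 * k + 2) n) as [Hn|Hn].
  - destruct (Nat.le_exists_sub (2 * k + 2) n Hn) as [j [-> _]].
    rewrite !coef_factorial by lia.
    replace (S (j + (2 * k + 2)) - 2 * S k)%nat with (S j) by lia.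
    replace (j + (2 * k + 2) - 2 * S k)%nat with j by lia.
    replace (j + (2 * k + 2) - 2 * k)%nat with (S (S j)) by lia.
    rewrite !fact_simpl, <- !tech_pow_Rmult.
    repeat rewrite ?mult_INR, ?plus_INR, ?S_INR, ?INR_0.
    pose proof (INR_fact_neq_0 k); pose proof (INR_fact_neq_0 j);
    pose proof (INR_fact_neq_0 (j + (2 * k + 2))); pose proof (pos_INR j); pose proof (pos_INR k).
    field. repeat split; auto; lra.
  - destruct (Nat.eq_dec n (2 * k + 1)) as [->|Hn'].
    + rewrite (coef_vanish (2 * k + 1) (S k)), !coef_factorial by lia.
      replace (S (2 * k + 1) - 2 * S k)%nat with 0%nat by lia.
      replace (2 * k + 1 - 2 * k)%nat with 1%nat by lia.
      replace (2 * k + 1)%nat with (S (2 * k)) by lia.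
      rewrite !fact_simpl, <- !tech_pow_Rmult, !pow_O. change (fact 0) with 1%nat.
      repeat rewrite ?mult_INR, ?plus_INR, ?S_INR, ?INR_0.
      pose proof (INR_fact_neq_0 k); pose proof (INR_fact_neq_0 (2 * k)); pose proof (pos_INR k).
      field. repeat split; auto; lra.
    + rewrite !(coef_vanish _ (S k)) by lia.
      destruct (Nat.eq_dec n (2 * k)) as [->|Hn''].
      * rewrite mult_INR. cbn [INR]. ring.
      * rewrite coef_vanish by lia. ring.
Qed.

Definition P (n : nat) (s t : R) : R :=
  sum_f_R0 (fun k => coef n k * s ^ (n - 2 * k) * t ^ (2 * k)) n.

Definition P_ds (n : nat) (s t : R) : R :=
  sum_f_R0 (fun k => coef n k * (INR (n - 2 * k) * s ^ pred (n - 2 * k)) * t ^ (2 * k)) n.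

Lemma P_0 s t : P 0 s t = 1.
Proof. unfold P, coef. cbn. ring. Qed.

Lemma is_derive_sum_f_R0 (f : nat -> R -> R) (df : nat -> R) (n : nat) (x : R) :
  (forall k, (k <= n)%nat -> is_derive (f k) x (df k)) ->
  is_derive (fun y => sum_f_R0 (fun k => f k y) n) x (sum_f_R0 df n).
Proof.
  intros Hf. induction n as [|n IH]; cbn [sum_f_R0].
  - apply Hf; lia.
  - apply (is_derive_plus (fun y => sum_f_R0 (fun k => f k y) n) (f (S n)));
      [apply IH; intros; apply Hf | apply Hf]; lia.
Qed.

Lemma is_derive_P n s t : is_derive (fun y => P n y t) s (P_ds n s t).
Proof.
  apply (is_derive_sum_f_R0 (fun k y => coef n k * y ^ (n - 2 * k) * t ^ (2 * k))).
  intros k _. auto_derive; [exact I|]. rewrite Rmult_1_l. reflexivity.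
Qed.

Lemma P_succ_monomial (c s t : R) (n k : nat) : (2 * k <= n)%nat ->
  (s ^ 2 + t ^ 2) * (c * (INR (n - 2 * k) * s ^ pred (n - 2 * k)) * t ^ (2 * k))
  - INR (2 * n + 1) * s * (c * s ^ (n - 2 * k) * t ^ (2 * k))
  = - INR (n + 2 * k + 1) * c * s ^ (S n - 2 * k) * t ^ (2 * k)
    + (INR n - 2 * INR k) * c * s ^ (S n - 2 * S k) * t ^ (2 * S k).
Proof.
  intros Hk. destruct (Nat.le_exists_sub (2 * k) n Hk) as [j [-> _]].
  replace (j + 2 * k - 2 * k)%nat with j by lia.
  replace (S (j + 2 * k) - 2 * k)%nat with (S j) by lia.
  replace (S (j + 2 * k) - 2 * S k)%nat with (pred j) by lia.
  replace (2 * S k)%nat with (2 * k + 2)%nat by lia.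
  rewrite pow_add.
  destruct j as [|j]; cbn [pred]; rewrite <- ?tech_pow_Rmult;
    repeat rewrite ?mult_INR, ?plus_INR, ?S_INR, ?INR_0; ring.
Qed.

Lemma P_succ n s t :
  (s ^ 2 + t ^ 2) * P_ds n s t - INR (2 * n + 1) * s * P n s t = P (S n) s t.
Proof.
  set (X k := - INR (n + 2 * k + 1) * coef n k * s ^ (S n - 2 * k) * t ^ (2 * k)).
  set (Y k := (INR n - 2 * INR k) * coef n k * s ^ (S n - 2 * S k) * t ^ (2 * S k)).
  assert (HX : sum_f_R0 (fun j => X (S j)) n = sum_f_R0 X n - X 0%nat).
  { assert (HXn : X (S n) = 0) by (unfold X; rewrite (coef_vanish n (S n)) by lia; ring).
    pose proof (decomp_sum X (S n) (Nat.lt_0_succ n)) as Hsplit.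
    rewrite tech5, HXn, Nat.pred_succ, Rplus_0_r in Hsplit. rewrite Hsplit. ring. }
  transitivity (sum_f_R0 X n + sum_f_R0 Y n).
  - unfold P_ds, P. rewrite !scal_sum, <- minus_sum, <- plus_sum.
    apply sum_eq; intros k _. unfold X, Y.
    destruct (Nat.le_gt_cases (2 * k) n) as [Hk|Hk].
    + rewrite <- P_succ_monomial by exact Hk. ring.
    + rewrite coef_vanish by lia. ring.
  - assert (HX0 : coef (S n) 0 * s ^ (S n - 2 * 0) * t ^ (2 * 0) = X 0%nat)
      by (unfold X; cbv beta; rewrite coef_succ_0; replace (n + 2 * 0 + 1)%nat with (S n) by lia; ring).
    unfold P. rewrite (decomp_sum _ (S n)), Nat.pred_succ, HX0 by lia.
    rewrite (sum_eq (fun j => coef (S n) (S j) * s ^ (S n - 2 * S j) * t ^ (2 * S j))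
                    (fun j => X (S j) + Y j)), plus_sum, HX.
    + ring.
    + intros j _. unfold X, Y. rewrite coef_succ.
      replace (n + 2 * S j + 1)%nat with (n + 2 * j + 3)%nat by lia. ring.
Qed.

Lemma sum_sq_pos s t : (s, t) <> (0, 0) -> 0 < s ^ 2 + t ^ 2.
Proof.
  intros Hst. pose proof (pow2_ge_0 s); pose proof (pow2_ge_0 t).
  destruct (Req_dec s 0) as [->|Hs].
  - destruct (Req_dec t 0) as [->|Ht]; [now contradiction Hst|].
    pose proof (pow2_gt_0 t Ht). lra.
  - pose proof (pow2_gt_0 s Hs). lra.
Qed.

Lemma locally_sum_sq_pos s t : 0 < s ^ 2 + t ^ 2 -> locally s (fun y => 0 < y ^ 2 + t ^ 2).
Proof.
  intros H.
  assert (Hc : continuous (fun y => y ^ 2 + t ^ 2) s).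
  { apply (ex_derive_continuous (fun y => y ^ 2 + t ^ 2)). auto_derive. auto. }
  exact (Hc (fun u => 0 < u) (open_gt 0 _ H)).
Qed.

Lemma is_derive_div_norm_pow (f : R -> R) (df : R) (q : nat) (s t : R) :
  0 < s ^ 2 + t ^ 2 -> is_derive f s df ->
  is_derive (fun y => f y / sqrt (y ^ 2 + t ^ 2) ^ q) s
    (((s ^ 2 + t ^ 2) * df - INR q * s * f s) / sqrt (s ^ 2 + t ^ 2) ^ (q + 2)).
Proof.
  intros Hpos Hf.
  assert (Hr : 0 < sqrt (s ^ 2 + t ^ 2)) by (apply sqrt_lt_R0, Hpos).
  assert (Hr2 : sqrt (s ^ 2 + t ^ 2) ^ 2 = s ^ 2 + t ^ 2) by (apply pow2_sqrt; lra).
  set (r := sqrt (s ^ 2 + t ^ 2)) in *.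
  assert (Hrq : r ^ q <> 0) by (apply pow_nonzero; lra).
  assert (Hg : is_derive (fun y => sqrt (y ^ 2 + t ^ 2) ^ q) s (INR q * s * r ^ q / r ^ 2)).
  { auto_derive; [lra|].
    replace (s * (s * 1) + t * (t * 1)) with (s ^ 2 + t ^ 2) by ring. fold r.
    destruct q as [|q].
    - rewrite INR_0. field. lra.
    - rewrite <- tech_pow_Rmult. cbn [pred]. field. lra. }
  rewrite <- Hr2, pow_add.
  replace ((r ^ 2 * df - INR q * s * f s) / (r ^ q * r ^ 2))
    with ((df * r ^ q - f s * (INR q * s * r ^ q / r ^ 2)) / (r ^ q) ^ 2)
    by (field; lra).
  apply (is_derive_div f); [exact Hf | exact Hg | exact Hrq].
Qed.

Lemma Derive_n_invnorm n t s : 0 < s ^ 2 + t ^ 2 ->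
  Derive_n (invnorm t) n s = P n s t / sqrt (s ^ 2 + t ^ 2) ^ (2 * n + 1).
Proof.
  revert s; induction n as [|n IH]; intros s Hs.
  - cbn [Derive_n]. unfold invnorm.
    rewrite P_0, Nat.mul_0_r, pow_1. unfold Rdiv. ring.
  - cbn [Derive_n].
    rewrite (Derive_ext_loc _ (fun y => P n y t / sqrt (y ^ 2 + t ^ 2) ^ (2 * n + 1))).
    + apply is_derive_unique.
      rewrite <- P_succ. replace (2 * S n + 1)%nat with (2 * n + 1 + 2)%nat by lia.
      apply (is_derive_div_norm_pow (fun y => P n y t)); [exact Hs | apply is_derive_P].
    + apply (filter_imp (fun y => 0 < y ^ 2 + t ^ 2)); [exact IH | exact (locally_sum_sq_pos s t Hs)].
Qed.

Lemma neg_quarter_pow k : (- / 4) ^ k = (-1) ^ k * / 2 ^ (2 * k).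
Proof.
  rewrite pow_mult, <- pow_inv, <- Rpow_mult_distr. f_equal. field.
Qed.

Lemma a_even_coef m k : (k <= m)%nat -> a_even m (m - k) = coef (2 * m) k.
Proof.
  intros Hk. unfold a_even, coef.
  replace (m - (m - k))%nat with k by lia. replace (m + (m - k))%nat with (2 * m - k)%nat by lia.
  rewrite pow_1_even, neg_quarter_pow, !binom_C by lia. ring.
Qed.

Lemma a_odd_coef m k : (k <= m)%nat -> a_odd m (m - k) = coef (2 * m + 1) k.
Proof.
  intros Hk. unfold a_odd, coef.
  replace (m - (m - k))%nat with k by lia.
  replace (m + (m - k) + 1)%nat with (2 * m + 1 - k)%nat by lia.
  rewrite !pow_add, pow_1_even, neg_quarter_pow, !binom_C by lia.
  ring.
Qed.

Lemma P_even_eq m s t : P_even m s t = P (2 * m) s t.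
Proof.
  unfold P_even, P. rewrite (sum_f_R0_vanishing_tail _ m (2 * m));
    [| lia | intros k Hk; rewrite coef_vanish by lia; ring].
  rewrite <- sum_f_R0_skip. apply sum_eq; intros k Hk.
  rewrite a_even_coef by exact Hk.
  replace (m - (m - k))%nat with k by lia. replace (2 * (m - k))%nat with (2 * m - 2 * k)%nat by lia.
  reflexivity.
Qed.

Lemma P_odd_eq m s t : P_odd m s t = P (2 * m + 1) s t.
Proof.
  unfold P_odd, P. rewrite (sum_f_R0_vanishing_tail _ m (2 * m + 1));
    [| lia | intros k Hk; rewrite coef_vanish by lia; ring].
  rewrite <- sum_f_R0_skip. apply sum_eq; intros k Hk.
  rewrite a_odd_coef by exact Hk.
  replace (m - (m - k))%nat with k by lia.
  replace (2 * (m - k) + 1)%nat with (2 * m + 1 - 2 * k)%nat by lia.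
  reflexivity.
Qed.

Lemma sum_a_even_div m N :
  sum_f_R0 (fun i => a_even m i / Binomial.C N (m - i)) m
  = sum_f_R0 (fun k => coef (2 * m) k / Binomial.C N k) m.
Proof.
  rewrite <- sum_f_R0_skip. apply sum_eq; intros k Hk.
  now replace (m - (m - k))%nat with k by lia; rewrite a_even_coef.
Qed.

Lemma sum_a_odd_div m N :
  sum_f_R0 (fun i => a_odd m i / Binomial.C N (m - i)) m
  = sum_f_R0 (fun k => coef (2 * m + 1) k / Binomial.C N k) m.
Proof.
  rewrite <- sum_f_R0_skip. apply sum_eq; intros k Hk.
  now replace (m - (m - k))%nat with k by lia; rewrite a_odd_coef.
Qed.

Lemma sum_coef_div_C n N : (2 * N <= n <= 2 * N + 1)%nat ->
  sum_f_R0 (fun k => coef n k / Binomial.C n k) N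
  = (-1) ^ n * INR (fact n) * (INR (S n) / 2 ^ n).
Proof.
  intros Hn. rewrite <- (diag_sum_closed N n) by lia.
  unfold diag_sum. rewrite scal_sum.
  apply sum_eq; intros k Hk. unfold coef. rewrite (binom_C n k) by lia.
  field. apply C_neq_0.
Qed.

Lemma sum_coef_div_C_pred n N : (1 <= n)%nat -> (2 * N <= n <= 2 * N + 1)%nat ->
  sum_f_R0 (fun k => coef n k / Binomial.C (n - 1) k) N
  = (-1) ^ n * INR (fact n) * (2 / 2 ^ n).
Proof.
  intros Hn HN.
  transitivity ((-1) ^ n * INR (fact n) * (2 * diag_sum N n - diag_sum N (n - 1))).
  - unfold diag_sum. rewrite scal_sum, <- minus_sum, scal_sum.
    apply sum_eq; intros k Hk. unfold coef.
    transitivity ((-1) ^ n * INR (fact n) * (- / 4) ^ k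
                  * (binom n k * binom (n - k) k / Binomial.C (n - 1) k)).
    + unfold Rdiv. ring.
    + rewrite binom_ratio by lia. ring.
  - rewrite !diag_sum_closed by lia.
    destruct n as [|n]; [lia|].
    rewrite Nat.sub_succ, Nat.sub_0_r, <- (tech_pow_Rmult 2), (S_INR (S n)).
    field. apply pow_nonzero; lra.
Qed.

Theorem lemma2p3 :
  (forall (m : nat) (s t : R), (s, t) <> (0, 0) ->
     Derive_n (invnorm t) (2 * m) s
       = P_even m s t / (sqrt (s ^ 2 + t ^ 2)) ^ (2 * (2 * m) + 1)
  /\ Derive_n (invnorm t) (2 * m + 1) s
       = P_odd m s t / (sqrt (s ^ 2 + t ^ 2)) ^ (2 * (2 * m + 1) + 1))
  /\
  (forall m : nat, (1 <= m)%nat ->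
     sum_f_R0 (fun i => a_even m i / Binomial.C (2 * m - 1) (m - i)) m
       = INR (Factorial.fact (2 * m)) / 2 ^ (2 * m - 1)
  /\ - (2 / INR (2 * m + 1)) * sum_f_R0 (fun i => a_odd m i / Binomial.C (2 * m) (m - i)) m
       = INR (Factorial.fact (2 * m)) / 2 ^ (2 * m - 1)
  /\ INR (m + 1) * sum_f_R0 (fun i => a_even m i / Binomial.C (2 * m) (m - i)) m
       = INR (Factorial.fact (2 * m + 2)) / 2 ^ (2 * m + 1)
  /\ - sum_f_R0 (fun i => a_odd m i / Binomial.C (2 * m + 1) (m - i)) m
       = INR (Factorial.fact (2 * m + 2)) / 2 ^ (2 * m + 1)).
Proof.
  split.
  - intros m s t Hst. pose proof (sum_sq_pos s t Hst) as Hpos.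
    rewrite P_even_eq, P_odd_eq, !Derive_n_invnorm by exact Hpos. split; reflexivity.
  - intros m Hm.
    pose proof (sum_coef_div_C_pred (2 * m) m ltac:(lia) ltac:(lia)) as S1.
    pose proof (sum_coef_div_C_pred (2 * m + 1) m ltac:(lia) ltac:(lia)) as S2.
    pose proof (sum_coef_div_C (2 * m) m ltac:(lia)) as S3.
    pose proof (sum_coef_div_C (2 * m + 1) m ltac:(lia)) as S4.
    rewrite Nat.add_sub in S2.
    rewrite !sum_a_even_div, !sum_a_odd_div, S1, S2, S3, S4, !pow_add, pow_1_even.
    assert (Hp : 2 ^ (2 * m) = 2 * 2 ^ (2 * m - 1))
      by (replace (2 * m)%nat with (S (2 * m - 1)) at 1 by lia; reflexivity).
    assert (Hf1 : (fact (2 * m + 1) = (2 * m + 1) * fact (2 * m))%nat)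
      by (rewrite Nat.add_1_r; reflexivity).
    assert (Hf2 : (fact (2 * m + 2) = (2 * m + 2) * fact (2 * m + 1))%nat)
      by (replace (2 * m + 2)%nat with (S (2 * m + 1)) by lia; reflexivity).
    rewrite Hf2, Hf1, Hp. repeat rewrite ?mult_INR, ?plus_INR, ?S_INR, ?INR_0.
    pose proof (INR_fact_neq_0 (2 * m)); pose proof (pos_INR m).
    assert (2 ^ (2 * m - 1) <> 0) by (apply pow_nonzero; lra).
    repeat split; field; repeat split; auto; lra.
Qed.
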